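(* Let $G$ be a group, $\omega$ a normalized 3-cocycle, $X,Y$ $G$-sets, and $\Psi_X,\Psi_Y$ as below. Let $(F,s):\mathcal M(X,\Psi_X)\to\mathcal M(Y,\Psi_Y)$ be a $\mathrm{Vec}_G^\omega$-module functor that preserves simple objects (i.e. $F(x)$ is simple for every simple $x$). Then there exist a $G$-equivariant map $f:X\to Y$ and a map $\Lambda:G\times X\to\mathbb F^\times$ satisfying $\Lambda(h,g^{-1}\cdot x)\Lambda^{-1}(gh,x)\Lambda(g,x)=\Psi_X^{-1}(g,h,x)\Psi_Y(g,h,f(x))$ for all $g,h\in G,x\in X$, such that $(F,s)$ is isomorphic as a module functor to $F_{f,\Lambda}$.
   Context: $\mathbb F$ algebraically closed. $\mathrm{Vec}_G^\omega$: finite-dimensional $G$-graded vector spaces, simple objects $\delta^g$, $\delta^g\otimes\delta^h=\delta^{gh}$, associator $\omega(g,h,k)\mathrm{id}$. For a $G$-set $X$ and normalized $\Psi:G\times G\times X\to\mathbb F^\times$ with $\Psi(h,k,g^{-1}\cdot x)\Psi^{-1}(gh,k,x)\Psi(g,hk,x)\Psi^{-1}(g,h,x)=\omega^{-1}(g,h,k)$, $\mathcal M(X,\Psi)$ is the category of finite-dimensional $X$-graded vector spaces (simple objects $x\in X$) with $\delta^g\triangleright x=g\cdot x$ and module constraint $m_{\delta^g,\delta^h,x}=\Psi(g,h,(gh)\cdot x)\mathrm{id}$. A module functor is an $\mathbb F$-linear functor with natural isomorphism $s_{C,M}:F(C\triangleright M)\to C\triangleright F(M)$ satisfying the module pentagon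 axiom; an isomorphism of module functors is a natural isomorphism $\eta$ with $s^H_{C,M}\circ\eta_{C\triangleright M}=(\mathrm{id}_C\triangleright\eta_M)\circ s^F_{C,M}$. For $f,\Lambda$ as in the claim, $F_{f,\Lambda}$ is the module functor with $F_{f,\Lambda}(x)=f(x)$ on simple objects (extended to an $\mathbb F$-linear functor) and coherence datum $s_{\delta^g,x}=\Lambda(g,g\cdot x)\,\mathrm{id}_{g\cdot f(x)}$. *)

From Stdlib Require Import Classical.
From HB Require Import structures.
From mathcomp Require Import all_boot all_algebra.
Set Implicit Arguments. Unset Strict Implicit. Unset Printing Implicit Defensive.
Import GRing.Theory.
Local Open Scope ring_scope.

Record group := Group {
  gcar :> Type;
  gmul : gcar -> gcar -> gcar;
  gone : gcar;
  ginv : gcar -> gcar;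
  gmulA : forall a b c, gmul a (gmul b c) = gmul (gmul a b) c;
  gmul1g : forall a, gmul gone a = a;
  gmulVg : forall a, gmul (ginv a) a = gone }.
Arguments gmul {_} _ _.
Arguments gone {_}.
Arguments ginv {_} _.

Record gset (G : group) := GSet {
  scar :> Type;
  sact : G -> scar -> scar;
  sact1 : forall x, sact gone x = x;
  sactM : forall g h x, sact (gmul g h) x = sact g (sact h x) }.
Arguments sact {_ _} _ _.

Definition equivariant (G : group) (X Y : gset G) (f : X -> Y) :=
  forall (g : G) (x : X), f (sact g x) = sact g (f x).

Definition normalized_3cocycle (K : fieldType) (G : group)
  (omega : G -> G -> G -> K) :=
  (forall g h k, omega g h k != 0) /\
  (forall h k, omega gone h k = 1) /\ (forall g k, omega g gone k = 1) /\
  (forall g h, omega g h gone = 1) /\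
  (forall g h k l, omega h k l * omega g (gmul h k) l * omega g h k
                   = omega (gmul g h) k l * omega g h (gmul k l)).

Definition module_datum (K : fieldType) (G : group) (X : gset G)
  (omega : G -> G -> G -> K) (Psi : G -> G -> X -> K) :=
  (forall g h x, Psi g h x != 0) /\
  (forall h x, Psi gone h x = 1) /\ (forall g x, Psi g gone x = 1) /\
  (forall g h k x, Psi h k (sact (ginv g) x) * (Psi (gmul g h) k x)^-1
                   * Psi g (gmul h k) x * (Psi g h x)^-1 = (omega g h k)^-1).

(* ---------- finite-dimensional D-graded vector spaces ----------
   An object is a finite-dimensional D-graded K-vector space K^(idx)
   given with a homogeneous basis indexed by the finite type idx,
   the basis vector i having degree deg i. *)
Record gobj (D : Type) := GObj { idx : finType; deg : idx -> D }.
Arguments idx {D} _.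
Arguments deg {D} _ _.

Section Hom.
Variables (K : fieldType) (D : Type).

(* degree-preserving linear maps M -> N, as matrices (rows = target basis) *)
Record ghom (M N : gobj D) := GHom {
  hmx :> idx N -> idx M -> K;
  hmxP : forall i j, hmx i j != 0 -> deg N i = deg M j }.

Definition meq (M N : gobj D) (f g : ghom M N) := forall i j, f i j = g i j.

Lemma hid_homog (M : gobj D) (i j : idx M) :
  ((i == j)%:R : K) != 0 -> deg M i = deg M j.
Proof. by case: (eqVneq i j) => [->|_] //=; rewrite eqxx. Qed.
Definition hid (M : gobj D) : ghom M M := GHom (@hid_homog M).

Lemma hzero_homog (M N : gobj D) (i : idx N) (j : idx M) :
  (0 : K) != 0 -> deg N i = deg M j.
Proof. by rewrite eqxx. Qed.
Definition hzero (M N : gobj D) : ghom M N := GHom (@hzero_homog M N).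

Lemma comp_homog (M N P : gobj D) (g : ghom N P) (f : ghom M N) i k :
  (\sum_j g i j * f j k) != 0 -> deg P i = deg M k.
Proof.
move=> H; apply: NNPP => Hne; move/eqP: H; apply; apply: big1 => j _.
case: (eqVneq (g i j) 0) => [->|gn]; first by rewrite mul0r.
case: (eqVneq (f j k) 0) => [->|fn]; first by rewrite mulr0.
by exfalso; apply: Hne; rewrite (hmxP gn) (hmxP fn).
Qed.
Definition comp (M N P : gobj D) (g : ghom N P) (f : ghom M N) : ghom M P :=
  GHom (@comp_homog M N P g f).

Lemma hadd_homog (M N : gobj D) (f g : ghom M N) i j :
  f i j + g i j != 0 -> deg N i = deg M j.
Proof.
case: (eqVneq (f i j) 0) => [fz|fn]; last by move=> _; exact: hmxP fn.
by rewrite fz add0r; exact: hmxP.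
Qed.
Definition hadd (M N : gobj D) (f g : ghom M N) : ghom M N :=
  GHom (@hadd_homog M N f g).

Lemma hscale_homog (M N : gobj D) (a : K) (f : ghom M N) i j :
  a * f i j != 0 -> deg N i = deg M j.
Proof. by rewrite mulf_eq0 negb_or => /andP[_ ]; exact: hmxP. Qed.
Definition hscale (M N : gobj D) (a : K) (f : ghom M N) : ghom M N :=
  GHom (@hscale_homog M N a f).

Definition is_iso (M N : gobj D) (f : ghom M N) :=
  exists g : ghom N M, meq (comp g f) (hid M) /\ meq (comp f g) (hid N).
Definition is_mono (M N : gobj D) (f : ghom M N) :=
  forall (P : gobj D) (g h : ghom P M), meq (comp f g) (comp f h) -> meq g h.
Definition is_zero (M : gobj D) := meq (hid M) (hzero M M).
Definition is_simple (M : gobj D) :=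
  ~ is_zero M /\
  forall (N : gobj D) (f : ghom N M), is_mono f -> is_zero N \/ is_iso f.
End Hom.

Section Action.
Variables (K : fieldType) (G : group).

Definition otens (C D : gobj G) : gobj G :=
  @GObj G (Finite.clone (idx C * idx D)%type _)
    (fun p => gmul (deg C p.1) (deg D p.2)).

Variable X : gset G.

Definition act_obj (C : gobj G) (M : gobj X) : gobj X :=
  @GObj X (Finite.clone (idx C * idx M)%type _)
    (fun p => sact (deg C p.1) (deg M p.2)).

Lemma act_hom_homog (C C' : gobj G) (M M' : gobj X)
  (a : ghom K C C') (p : ghom K M M') (i : idx (act_obj C' M'))
  (j : idx (act_obj C M)) :
  a i.1 j.1 * p i.2 j.2 != 0 -> deg (act_obj C' M') i = deg (act_obj C M) j.
Proof.
rewrite mulf_eq0 negb_or => /andP[an pn] /=.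
by rewrite (hmxP an) (hmxP pn).
Qed.
Definition act_hom (C C' : gobj G) (M M' : gobj X)
  (a : ghom K C C') (p : ghom K M M') : ghom K (act_obj C M) (act_obj C' M') :=
  GHom (@act_hom_homog C C' M M' a p).

(* module constraint m_{C,D,M} : (C (x) D) |> M -> C |> (D |> M),
   equal to Psi(g,h,(gh).x) id on simple objects delta^g, delta^h, x *)
Definition mconstr_fun (Psi : G -> G -> X -> K) (C D : gobj G) (M : gobj X)
  (i : idx (act_obj C (act_obj D M))) (j : idx (act_obj (otens C D) M)) : K :=
  if (i.1 == j.1.1) && (i.2.1 == j.1.2) && (i.2.2 == j.2)
  then Psi (deg C i.1) (deg D i.2.1) (sact (gmul (deg C i.1) (deg D i.2.1)) (deg M i.2.2))
  else 0.

Lemma mconstr_homog Psi C D M i j :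
  @mconstr_fun Psi C D M i j != 0 ->
  deg (act_obj C (act_obj D M)) i = deg (act_obj (otens C D) M) j.
Proof.
case: i j => [c [d m]] [[c' d'] m']; rewrite /mconstr_fun /=.
case: ifP => [/andP[/andP[/eqP<- /eqP<-] /eqP<-] _ | _]; last by rewrite eqxx.
by rewrite sactM.
Qed.
Definition mconstr Psi C D M :
  ghom K (act_obj (otens C D) M) (act_obj C (act_obj D M)) :=
  GHom (@mconstr_homog Psi C D M).
End Action.

Section ModFun.
Variables (K : fieldType) (G : group) (X Y : gset G).

Definition is_linear_functor (Fo : gobj X -> gobj Y)
  (Fm : forall M N : gobj X, ghom K M N -> ghom K (Fo M) (Fo N)) :=
  (forall M N (f g : ghom K M N), meq f g -> meq (Fm _ _ f) (Fm _ _ g)) /\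
  (forall M, meq (Fm _ _ (hid K M)) (hid K (Fo M))) /\
  (forall M N P (g : ghom K N P) (f : ghom K M N),
      meq (Fm _ _ (comp g f)) (comp (Fm _ _ g) (Fm _ _ f))) /\
  (forall M N (f g : ghom K M N),
      meq (Fm _ _ (hadd f g)) (hadd (Fm _ _ f) (Fm _ _ g))) /\
  (forall M N (a : K) (f : ghom K M N),
      meq (Fm _ _ (hscale a f)) (hscale a (Fm _ _ f))).

Definition is_module_functor (PsiX : G -> G -> X -> K) (PsiY : G -> G -> Y -> K)
  (Fo : gobj X -> gobj Y)
  (Fm : forall M N : gobj X, ghom K M N -> ghom K (Fo M) (Fo N))
  (s : forall (C : gobj G) (M : gobj X), ghom K (Fo (act_obj C M)) (act_obj C (Fo M))) :=
  is_linear_functor Fm /\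
  (forall C M, is_iso (s C M)) /\
  (forall C C' M M' (a : ghom K C C') (p : ghom K M M'),
      meq (comp (s C' M') (Fm _ _ (act_hom a p))) (comp (act_hom a (Fm _ _ p)) (s C M))) /\
  (forall (C D : gobj G) (M : gobj X),
      meq (comp (act_hom (hid K C) (s D M)) (comp (s C (act_obj D M)) (Fm _ _ (mconstr PsiX C D M))))
          (comp (mconstr PsiY C D (Fo M)) (s (otens C D) M))).

Definition modfun_iso (Fo Ho : gobj X -> gobj Y)
  (Fm : forall M N : gobj X, ghom K M N -> ghom K (Fo M) (Fo N))
  (s : forall (C : gobj G) (M : gobj X), ghom K (Fo (act_obj C M)) (act_obj C (Fo M)))
  (Hm : forall M N : gobj X, ghom K M N -> ghom K (Ho M) (Ho N))
  (t : forall (C : gobj G) (M : gobj X), ghom K (Ho (act_obj C M)) (act_obj C (Ho M))) :=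
  exists eta : forall M : gobj X, ghom K (Fo M) (Ho M),
    (forall M, is_iso (eta M)) /\
    (forall M N (p : ghom K M N), meq (comp (Hm _ _ p) (eta M)) (comp (eta N) (Fm _ _ p))) /\
    (forall C M, meq (comp (t C M) (eta (act_obj C M))) (comp (act_hom (hid K C) (eta M)) (s C M))).

Variable f : X -> Y.

Definition Ffo (M : gobj X) : gobj Y := @GObj Y (idx M) (fun i => f (deg M i)).

Lemma Ffm_homog (M N : gobj X) (p : ghom K M N) i j :
  p i j != 0 -> deg (Ffo N) i = deg (Ffo M) j.
Proof. by move=> /hmxP /= ->. Qed.
Definition Ffm (M N : gobj X) (p : ghom K M N) : ghom K (Ffo M) (Ffo N) :=
  @GHom K Y (Ffo M) (Ffo N) (fun i j => p i j) (@Ffm_homog M N p).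

Variables (hf : equivariant f) (Lam : G -> X -> K).

Definition Ffs_fun (C : gobj G) (M : gobj X)
  (i : idx (act_obj C (Ffo M))) (j : idx (Ffo (act_obj C M))) : K :=
  if (i.1 == j.1) && (i.2 == j.2)
  then Lam (deg C i.1) (sact (deg C i.1) (deg M i.2)) else 0.

Lemma Ffs_homog C M i j :
  @Ffs_fun C M i j != 0 -> deg (act_obj C (Ffo M)) i = deg (Ffo (act_obj C M)) j.
Proof.
case: i j => [c m] [c' m']; rewrite /Ffs_fun /=.
case: ifP => [/andP[/eqP<- /eqP<-] _ | _]; last by rewrite eqxx.
by rewrite hf.
Qed.
(* s_{C,M} ; on simple objects s_{delta^g,x} = Lambda(g, g.x) id *)
Definition Ffs (C : gobj G) (M : gobj X) :
  ghom K (Ffo (act_obj C M)) (act_obj C (Ffo M)) := GHom (@Ffs_homog C M).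
End ModFun.

(* Simple objects of M(X, Psi) are exactly the one-dimensional graded spaces,
   so F sends the simple object x to a line sitting in some degree f(x), and by
   linearity F acts on maps between lines through their scalars.  Since every
   object is the direct sum of its basis lines, the images under F of the line
   projections assemble into a natural isomorphism eta : F ~= F_f.  The
   coherence isomorphism s_{delta^g, x} is then a nonzero scalar
   Lambda(g, g.x) between lines; comparing degrees gives the equivariance of f,
   and by construction eta intertwines s with the coherence datum of
   F_{f,Lambda}.  Conjugating the module pentagon of (F, s) by eta yields the
   pentagon of F_{f,Lambda}, whose component at delta^g, delta^h, x is exactly
   the identity required of Lambda. *)

From Pilot Require Import Defs.
From Stdlib Require Import Setoid Morphisms.
From HB Require Import structures.
From mathcomp Require Import all_boot all_algebra ring.
Set Implicit Arguments. Unset Strict Implicit. Unset Printing Implicit Defensive.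
Import GRing.Theory.
Local Open Scope ring_scope.

Lemma gmulgV (G : group) (a : G) : gmul a (ginv a) = gone.
Proof.
by rewrite -[gmul a _]gmul1g -(gmulVg (ginv a)) -gmulA (gmulA _ a) gmulVg gmul1g.
Qed.

Lemma sum_card1 (V : nmodType) (T : finType) (t0 : T) (F : T -> V) :
  #|T| = 1 -> \sum_t F t = F t0.
Proof.
move=> /fintype1[x Tx]; rewrite (big_only1 t0) // => t.
by rewrite (Tx t) (Tx t0) eqxx.
Qed.

Lemma sum_mul_delta (R : pzSemiRingType) (T : finType) (j : T) (F : T -> R) :
  \sum_i F i * (i == j)%:R = F j.
Proof. by rewrite (big_only1 j) ?eqxx ?mulr1 // => i /negPf->; rewrite mulr0. Qed.

Lemma sum_delta_mul (R : pzSemiRingType) (T : finType) (j : T) (F : T -> R) :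
  \sum_i (i == j)%:R * F i = F j.
Proof. by rewrite (big_only1 j) ?eqxx ?mul1r // => i /negPf->; rewrite mul0r. Qed.

Lemma card1_eq (T : finType) (a b : T) : #|T| = 1 -> a = b.
Proof. by move=> /fintype1[x Tx]; rewrite (Tx a) (Tx b). Qed.

#[export] Instance meq_Equivalence (K : fieldType) (D : Type) (M N : gobj D) :
  Equivalence (@meq K D M N).
Proof.
by split=> [f | f g e | f g h e1 e2] i j //; rewrite ?e ?e1 ?e2.
Qed.

#[export] Instance hmx_Proper (K : fieldType) (D : Type) (M N : gobj D) :
  Proper (@meq K D M N ==> eq ==> eq ==> eq) (@hmx K D M N).
Proof. by move=> f g fg i _ <- j _ <-. Qed.

#[export] Instance comp_Proper (K : fieldType) (D : Type) (M N P : gobj D) :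
  Proper (@meq K D N P ==> @meq K D M N ==> @meq K D M P) (@Defs.comp K D M N P).
Proof. by move=> g g' eg f f' ef i k /=; apply: eq_bigr => j _; rewrite eg ef. Qed.

Section GradedMaps.
Variables (K : fieldType) (D : Type).
Implicit Types M N P Q : gobj D.

Lemma compE M N P (g : ghom K N P) (f : ghom K M N) i k :
  Defs.comp g f i k = \sum_j g i j * f j k.
Proof. by []. Qed.

Lemma compA M N P Q (h : ghom K P Q) (g : ghom K N P) (f : ghom K M N) :
  meq (Defs.comp h (Defs.comp g f)) (Defs.comp (Defs.comp h g) f).
Proof.
move=> i l; rewrite !compE; under eq_bigr => j _ do rewrite big_distrr.
rewrite exchange_big; apply: eq_bigr => k _ /=.
by rewrite big_distrl; apply: eq_bigr => j _ /=; rewrite mulrA.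
Qed.

Lemma comp_idl M N (f : ghom K M N) : meq (Defs.comp (hid K N) f) f.
Proof.
move=> i k; rewrite compE (big_only1 i) /= ?eqxx ?mul1r // => j.
by rewrite eq_sym => /negPf->; rewrite mul0r.
Qed.

Lemma comp_idr M N (f : ghom K M N) : meq (Defs.comp f (hid K M)) f.
Proof. by move=> i k; rewrite compE sum_mul_delta. Qed.

Lemma iso_cancelr M N P (A B : ghom K N P) (E : ghom K M N) :
  is_iso E -> meq (Defs.comp A E) (Defs.comp B E) -> meq A B.
Proof.
case=> E' [_ EE'] AB.
by rewrite -(comp_idr A) -(comp_idr B) -EE' !compA AB.
Qed.

(* The simple object of degree [z]: [delta^g] for [D = G], and [x] for [D = X]. *)
Definition line (z : D) : gobj D := @GObj D unit (fun _ => z).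

Lemma card_line z : #|idx (line z)| = 1.
Proof. exact: card_unit. Qed.

Lemma sum_line z (F : idx (line z) -> K) : \sum_t F t = F tt.
Proof. exact: sum_card1 (card_line z). Qed.

Lemma line_inj_homog M (i : idx M) (k : idx M) (t : idx (line (deg M i))) :
  ((k == i)%:R : K) != 0 -> deg M k = deg (line (deg M i)) t.
Proof. by case: (eqVneq k i) => [->|] //; rewrite eqxx. Qed.
Definition line_inj M (i : idx M) : ghom K (line (deg M i)) M :=
  GHom (@line_inj_homog M i).

Lemma line_proj_homog M (i : idx M) (t : idx (line (deg M i))) (k : idx M) :
  ((k == i)%:R : K) != 0 -> deg (line (deg M i)) t = deg M k.
Proof. by case: (eqVneq k i) => [->|] //; rewrite eqxx. Qed.
Definition line_proj M (i : idx M) : ghom K M (line (deg M i)) :=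
  GHom (@line_proj_homog M i).

Lemma is_zero_card0 M : #|idx M| = 0 -> is_zero K M.
Proof. by move=> /card0_eq M0 i; have := M0 i. Qed.

Lemma not_zero_card1 M : #|idx M| = 1 -> ~ is_zero K M.
Proof.
by move=> /fintype1[i _] /(_ i i) /eqP; rewrite /= eqxx oner_eq0.
Qed.

Lemma line_inj_mono M (i : idx M) : is_mono (line_inj i).
Proof.
move=> P g h gh [] p; have := gh i p; rewrite !compE !sum_line.
by rewrite /= eqxx !mul1r.
Qed.

Lemma iso_card1 M N (f : ghom K M N) i j :
  #|idx M| = 1 -> #|idx N| = 1 -> f i j != 0 -> is_iso f.
Proof.
move=> M1 N1 fij.
pose r (j' : idx M) (i' : idx N) : K := (f i j)^-1.
have r_homog j' i' : r j' i' != 0 -> deg M j' = deg N i'.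
  by rewrite (card1_eq j' j M1) (card1_eq i' i N1) (hmxP fij).
exists (GHom r_homog); split=> a b; rewrite compE /r /=.
  by rewrite (sum_card1 i _ N1) (card1_eq a j M1) (card1_eq b j M1) eqxx mulVf.
by rewrite (sum_card1 j _ M1) (card1_eq a i N1) (card1_eq b i N1) eqxx mulfV.
Qed.

Lemma iso_card1_neq0 M N (f : ghom K M N) i j :
  #|idx M| = 1 -> #|idx N| = 1 -> is_iso f -> f i j != 0.
Proof.
move=> M1 N1 [g [gf _]]; apply/negP => /eqP fij.
have := gf j j; rewrite compE (sum_card1 i _ N1) fij mulr0 /= eqxx.
by move=> /eqP; rewrite eq_sym oner_eq0.
Qed.

Section MonoIntoLine.
Variables (M N : gobj D) (f : ghom K N M) (i0 : idx M).
Hypotheses (M1 : #|idx M| = 1) (f_mono : is_mono f).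

Lemma mono_into_line_neq0 j : f i0 j != 0.
Proof.
apply/negP => /eqP fj0.
have : meq (Defs.comp f (line_inj j)) (Defs.comp f (hzero K _ _)).
  move=> i t; rewrite !compE (big_only1 j) /= ?eqxx ?mulr1 //.
    by rewrite (card1_eq i i0 M1) fj0 big1 // => ? _; rewrite mulr0.
  by move=> k /negPf->; rewrite mulr0.
by move=> /f_mono /(_ j tt) /eqP; rewrite /= eqxx oner_eq0.
Qed.

Lemma mono_into_line_card : (#|idx N| <= 1)%N.
Proof.
apply/fintype_le1P => j1 j2; case: (eqVneq j2 j1) => // ne; exfalso.
(* For [j1 != j2], [v = f i0 j1 e_j2 - f i0 j2 e_j1] is a nonzero vector killed by [f]. *)
pose v (k : idx N) (t : idx (line (deg N j2))) : K :=
  f i0 j1 * (k == j2)%:R - f i0 j2 * (k == j1)%:R.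
have v_homog k t : v k t != 0 -> deg N k = deg (line (deg N j2)) t.
  rewrite /v; case: (eqVneq k j2) => [-> //|_]; rewrite mulr0 sub0r oppr_eq0.
  case: (eqVneq k j1) => [->|]; last by rewrite mulr0 eqxx.
  move=> _; rewrite -(hmxP (mono_into_line_neq0 j1)).
  exact: hmxP (mono_into_line_neq0 j2).
have : meq (Defs.comp f (GHom v_homog)) (Defs.comp f (hzero K _ _)).
  move=> i t; rewrite !compE [in RHS]big1 => [|? _]; last by rewrite mulr0.
  under eq_bigr => k _ do rewrite /= /v mulrBr !mulrA.
  by rewrite sumrB !sum_mul_delta (card1_eq i i0 M1) mulrC subrr.
move=> /f_mono /(_ j2 tt) /eqP; rewrite /= /v eqxx (negPf ne) mulr0 subr0 mulr1.
by rewrite (negPf (mono_into_line_neq0 j1)).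
Qed.
End MonoIntoLine.

Lemma big_haddE M N (I : finType) (F : I -> ghom K M N) a b :
  (\big[@hadd K D M N/hzero K M N]_i F i) a b = \sum_i F i a b.
Proof. exact: (big_morph (fun q : ghom K M N => q a b)). Qed.

Lemma line_decomp M N (q : ghom K M N) :
  meq q (\big[@hadd K D M N/hzero K M N]_i Defs.comp (Defs.comp q (line_inj i)) (line_proj i)).
Proof.
move=> a b; rewrite big_haddE -[LHS](sum_mul_delta b); apply: eq_bigr => i _.
by rewrite compE sum_line compE sum_mul_delta eq_sym.
Qed.

Lemma simpleP M : is_simple K M <-> #|idx M| = 1.
Proof.
split=> [[M_nz M_sub] | M1].
  case: (pickP (fun _ : idx M => true)) => [i0 _ | M0]; last first.
    by case: M_nz => i; have := M0 i.
  have M_le1 : (#|idx M| <= 1)%N.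
    case: (M_sub _ _ (line_inj_mono (i := i0))) => [/(not_zero_card1 (card_line _)) // | [r [_ rr]]].
    apply/fintype_le1P => i j; suff eq_i0 k : k = i0 by rewrite (eq_i0 i) (eq_i0 j).
    have := rr k k; rewrite compE sum_line /= eqxx.
    by case: eqP => // _; rewrite mul0r => /eqP; rewrite eq_sym oner_eq0.
  by apply/eqP; rewrite eqn_leq M_le1; apply/card_gt0P; exists i0.
split; first exact: not_zero_card1.
move=> N f f_mono; have [i0 _] := fintype1 M1.
have := mono_into_line_card i0 M1 f_mono; rewrite leq_eqVlt ltnS leqn0.
case/orP => [/eqP N1 | /eqP/is_zero_card0]; [right | by left].
have [j _] := fintype1 N1.
exact: iso_card1 N1 M1 (mono_into_line_neq0 i0 M1 f_mono j).
Qed.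
End GradedMaps.

#[export] Instance act_hom_Proper (K : fieldType) (G : group) (Z : gset G)
    (C C' : gobj G) (M M' : gobj Z) :
  Proper (@meq K G C C' ==> @meq K Z M M' ==> @meq K Z _ _) (@act_hom K G Z C C' M M').
Proof. by move=> a a' ea p p' ep i j /=; rewrite ea ep. Qed.

Section Action.
Variables (K : fieldType) (G : group) (Z : gset G).

Lemma sum_act (C : gobj G) (M : gobj Z) (F : idx (act_obj C M) -> K) :
  \sum_p F p = \sum_c \sum_m F (c, m).
Proof. by rewrite pair_bigA; apply: eq_bigr => -[]. Qed.

Lemma sum_otens (C D : gobj G) (F : idx (otens C D) -> K) :
  \sum_p F p = \sum_c \sum_d F (c, d).
Proof. by rewrite pair_bigA; apply: eq_bigr => -[]. Qed.

Lemma card_act (C : gobj G) (M : gobj Z) : #|idx (act_obj C M)| = (#|idx C| * #|idx M|)%N.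
Proof. exact: card_prod. Qed.

Lemma act_hom_comp (C1 C2 C3 : gobj G) (M1 M2 M3 : gobj Z)
  (a : ghom K C2 C3) (a' : ghom K C1 C2) (p : ghom K M2 M3) (p' : ghom K M1 M2) :
  meq (act_hom (Defs.comp a a') (Defs.comp p p')) (Defs.comp (act_hom a p) (act_hom a' p')).
Proof.
move=> i j; rewrite compE sum_act /= big_distrl; apply: eq_bigr => c _ /=.
rewrite big_distrr; apply: eq_bigr => m _ /=.
by rewrite mulrACA.
Qed.

Definition act_line (g : G) (x : Z) : gobj Z := act_obj (line g) (line x).

Lemma card_act_line g x : #|idx (act_line g x)| = 1.
Proof. by rewrite card_act !card_line. Qed.

Definition act_line_proj g x : ghom K (act_line g x) (line (sact g x)) :=
  line_proj K (M := act_line g x) (tt, tt).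

Lemma act_line_proj_iso g x : is_iso (act_line_proj g x).
Proof.
have e : act_line_proj g x tt (tt, tt) != 0 by rewrite /= ?eqxx ?oner_eq0.
exact: iso_card1 (card_act_line g x) (card_line _) e.
Qed.

Lemma line_proj_act (C : gobj G) (M : gobj Z) c m :
  meq (line_proj K (M := act_obj C M) (c, m))
      (Defs.comp (act_line_proj (deg C c) (deg M m))
                 (act_hom (line_proj K c) (line_proj K (M := M) m))).
Proof.
move=> t [c' m']; rewrite compE (sum_card1 (tt, tt) _ (card_act_line (deg C c) (deg M m))) /= mul1r.
by rewrite -natrM mulnb xpair_eqE.
Qed.

Lemma mconstr_nat (Psi : G -> G -> Z -> K) (C D : gobj G) (M N : gobj Z) (q : ghom K M N) :
  meq (Defs.comp (mconstr Psi C D N) (act_hom (hid K (otens C D)) q))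
      (Defs.comp (act_hom (hid K C) (act_hom (hid K D) q)) (mconstr Psi C D M)).
Proof.
case=> c [d n] [[c' d'] m]; rewrite !compE !sum_act /=.
rewrite (big_only1 (c', d')) // => [|t /negPf ne _]; last first.
  by rewrite big1 // => i _; rewrite ne mul0r mulr0.
rewrite (big_only1 n) // => [|t ne _]; last first.
  by rewrite /mconstr_fun /= [n == t]eq_sym (negPf ne) andbF mul0r.
rewrite (big_only1 c) // => [|t ne _]; last first.
  by rewrite big1 // => i _; rewrite eq_sym (negPf ne) !mul0r.
rewrite (big_only1 (d, m)) // => [|[d0 m0] ne _]; last first.
  rewrite /= eqxx mul1r /mconstr_fun /=.
  case: (eqVneq d d0) => [e|]; last by rewrite !mul0r.
  by subst d0; rewrite eqE /= eqxx /= in ne; rewrite (negPf ne) andbF mulr0.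
rewrite /mconstr_fun /= !eqxx mul1r !andbT mul1r.
case: (eqVneq (q n m) 0) => [->|qn]; first by rewrite !mulr0 mul0r.
by case: ifP => _; rewrite ?mulr0 ?mul0r // (hmxP qn) mulrC.
Qed.
End Action.

Definition module_pentagon (K : fieldType) (G : group) (X Y : gset G)
  (PsiX : G -> G -> X -> K) (PsiY : G -> G -> Y -> K) (Fo : gobj X -> gobj Y)
  (Fm : forall M N : gobj X, ghom K M N -> ghom K (Fo M) (Fo N))
  (s : forall (C : gobj G) (M : gobj X), ghom K (Fo (act_obj C M)) (act_obj C (Fo M))) :=
  forall (C D : gobj G) (M : gobj X),
    meq (Defs.comp (act_hom (hid K C) (s D M))
           (Defs.comp (s C (act_obj D M)) (Fm _ _ (mconstr PsiX C D M))))
        (Defs.comp (mconstr PsiY C D (Fo M)) (s (otens C D) M)).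

Lemma act_hom_id_comp (K : fieldType) (G : group) (Z : gset G) (C : gobj G)
  (M N P : gobj Z) (g : ghom K N P) (f : ghom K M N) :
  meq (act_hom (hid K C) (Defs.comp g f))
      (Defs.comp (act_hom (hid K C) g) (act_hom (hid K C) f)).
Proof. by rewrite -act_hom_comp comp_idl. Qed.

Section Transport.
Variables (K : fieldType) (G : group) (X Y : gset G).
Variables (PsiX : G -> G -> X -> K) (PsiY : G -> G -> Y -> K) (Fo Ho : gobj X -> gobj Y).
Variables (Fm : forall M N : gobj X, ghom K M N -> ghom K (Fo M) (Fo N))
  (Hm : forall M N : gobj X, ghom K M N -> ghom K (Ho M) (Ho N)).
Variables (s : forall (C : gobj G) (M : gobj X), ghom K (Fo (act_obj C M)) (act_obj C (Fo M)))
  (t : forall (C : gobj G) (M : gobj X), ghom K (Ho (act_obj C M)) (act_obj C (Ho M))).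
Variable eta : forall M : gobj X, ghom K (Fo M) (Ho M).
Hypothesis eta_iso : forall M, is_iso (eta M).
Hypothesis eta_nat : forall M N (p : ghom K M N),
  meq (Defs.comp (Hm p) (eta M)) (Defs.comp (eta N) (Fm p)).
Hypothesis eta_compat : forall C M,
  meq (Defs.comp (t C M) (eta (act_obj C M))) (Defs.comp (act_hom (hid K C) (eta M)) (s C M)).

Lemma module_pentagon_transport :
  module_pentagon PsiX PsiY Fm s -> module_pentagon PsiX PsiY Hm t.
Proof.
(* Precompose with the isomorphism [eta] and push it leftwards through every factor. *)
move=> pent C D M; apply: (iso_cancelr (eta_iso (act_obj (otens C D) M))).
rewrite -!compA eta_nat (compA (t C _)) eta_compat !compA -act_hom_id_comp eta_compat.
by rewrite act_hom_id_comp -!compA pent compA -mconstr_nat -compA -eta_compat.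
Qed.
End Transport.

Section LinearFunctor.
Variables (K : fieldType) (G : group) (X Y : gset G) (Fo : gobj X -> gobj Y)
  (Fm : forall M N : gobj X, ghom K M N -> ghom K (Fo M) (Fo N)).
Hypothesis Fm_linear : is_linear_functor Fm.
Hypothesis F_simple : forall M : gobj X, is_simple K M -> is_simple K (Fo M).

#[local] Instance Fm_Proper M N : Proper (@meq K X M N ==> @meq K Y _ _) (@Fm M N).
Proof. by case: Fm_linear => h _; exact: h. Qed.

Lemma Fm_id M a b : Fm (hid K M) a b = (a == b)%:R.
Proof. by case: Fm_linear => _ [h _]; rewrite h. Qed.

Lemma Fm_comp M N P (g : ghom K N P) (p : ghom K M N) :
  meq (Fm (Defs.comp g p)) (Defs.comp (Fm g) (Fm p)).
Proof. by case: Fm_linear => _ [_ [h _]]; exact: h. Qed.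

Lemma Fm_scale M N c (p : ghom K M N) a b : Fm (hscale c p) a b = c * Fm p a b.
Proof. by case: Fm_linear => _ [_ [_ [_ h]]]; rewrite h. Qed.

Lemma Fm_zero M N (q : ghom K M N) a b : (forall i j, q i j = 0) -> Fm q a b = 0.
Proof.
move=> q0; have -> : meq q (hscale 0 q) by move=> i j /=; rewrite q0 mul0r.
by rewrite Fm_scale mul0r.
Qed.

Lemma Fm_big_hadd M N (I : finType) (F : I -> ghom K M N) a b :
  Fm (\big[@hadd K X M N/hzero K M N]_i F i) a b = \sum_i Fm (F i) a b.
Proof.
apply: (big_morph (fun q : ghom K M N => Fm q a b) (id1 := 0) (op1 := +%R)).
  by move=> p q; case: Fm_linear => _ [_ [_ [h _]]]; rewrite h.
exact: Fm_zero.
Qed.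

Lemma Fm_iso M N (f : ghom K M N) : is_iso f -> is_iso (Fm f).
Proof.
case=> g [gf fg]; exists (Fm g).
by split=> a b; rewrite -Fm_comp ?gf ?fg Fm_id.
Qed.

Lemma card_F_line z : #|idx (Fo (line z))| = 1.
Proof. by apply/simpleP/F_simple/simpleP; exact: card_line. Qed.

Definition Fbasis z : idx (Fo (line z)) := projT1 (fintype1 (card_F_line z)).
Definition Fdeg z : Y := deg (Fo (line z)) (Fbasis z).

Lemma sum_F_line z (F : idx (Fo (line z)) -> K) : \sum_t F t = F (Fbasis z).
Proof. exact: sum_card1 (card_F_line z). Qed.

Lemma Fm_line x y (q : ghom K (line x) (line y)) b a : Fm q b a = q tt tt.
Proof.
case: (eqVneq (q tt tt) 0) => [q0 | qn]; first by rewrite q0 Fm_zero // => [[] []].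
have yx : y = x := hmxP qn; subst y.
have -> : meq q (hscale (q tt tt) (hid K _)) by move=> [] [] /=; rewrite mulr1.
by rewrite Fm_scale Fm_id (card1_eq b a (card_F_line x)) eqxx /= !mulr1.
Qed.

Lemma Fm_decomp M N (q : ghom K M N) b a :
  Fm q b a = \sum_i Fm (Defs.comp q (line_inj K i)) b (Fbasis (deg M i))
                   * Fm (line_proj K i) (Fbasis (deg M i)) a.
Proof.
rewrite {1}(line_decomp q) Fm_big_hadd; apply: eq_bigr => i _.
by rewrite Fm_comp compE sum_F_line.
Qed.

Lemma eta_homog M (i : idx M) (k : idx (Fo M)) :
  Fm (line_proj K i) (Fbasis (deg M i)) k != 0 -> deg (Ffo Fdeg M) i = deg (Fo M) k.
Proof. exact: hmxP. Qed.
Definition eta M : ghom K (Fo M) (Ffo Fdeg M) :=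
  @GHom K Y (Fo M) (Ffo Fdeg M) _ (@eta_homog M).

Lemma eta_inv_homog M (k : idx (Fo M)) (i : idx M) :
  Fm (line_inj K i) k (Fbasis (deg M i)) != 0 -> deg (Fo M) k = deg (Ffo Fdeg M) i.
Proof. exact: hmxP. Qed.
Definition eta_inv M : ghom K (Ffo Fdeg M) (Fo M) :=
  @GHom K Y (Ffo Fdeg M) (Fo M) _ (@eta_inv_homog M).

Lemma eta_iso M : is_iso (eta M).
Proof.
exists (eta_inv M); split=> a b; rewrite compE /=.
  rewrite -Fm_id Fm_decomp; apply: eq_bigr => i _.
  by rewrite comp_idl.
by rewrite -compE -Fm_comp Fm_line compE/= sum_mul_delta eq_sym.
Qed.

Lemma eta_nat M N (p : ghom K M N) :
  meq (Defs.comp (Ffm Fdeg p) (eta M)) (Defs.comp (eta N) (Fm p)).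
Proof.
move=> j k; rewrite !compE /= -compE -Fm_comp Fm_decomp; apply: eq_bigr => i _.
by rewrite Fm_line !compE /= sum_mul_delta sum_delta_mul.
Qed.

Section ModuleFunctor.
Variable s : forall (C : gobj G) (M : gobj X), ghom K (Fo (act_obj C M)) (act_obj C (Fo M)).
Hypothesis s_iso : forall C M, is_iso (s C M).
Hypothesis s_nat : forall C C' M M' (a : ghom K C C') (p : ghom K M M'),
  meq (Defs.comp (s C' M') (Fm (act_hom a p))) (Defs.comp (act_hom a (Fm p)) (s C M)).

Lemma card_F_act_line g x : #|idx (Fo (act_line g x))| = 1.
Proof. by apply/simpleP/F_simple/simpleP; exact: card_act_line. Qed.

Definition Fbasis_act g x : idx (Fo (act_line g x)) :=
  projT1 (fintype1 (card_F_act_line g x)).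

Lemma Fm_act_line_proj_neq0 g x :
  Fm (act_line_proj K g x) (Fbasis (sact g x)) (Fbasis_act g x) != 0.
Proof.
by apply: iso_card1_neq0 (card_F_act_line g x) (card_F_line _) _; apply/Fm_iso/act_line_proj_iso.
Qed.

Lemma s_line_neq0 g x : s (line g) (line x) (tt, Fbasis x) (Fbasis_act g x) != 0.
Proof.
apply: iso_card1_neq0 (card_F_act_line g x) _ (s_iso _ _).
by rewrite card_act card_line card_F_line.
Qed.

Lemma Fdeg_equivariant : equivariant Fdeg.
Proof.
move=> g x.
by rewrite [LHS](hmxP (Fm_act_line_proj_neq0 g x)) -(hmxP (s_line_neq0 g x)).
Qed.

Definition s_coeff g x : K :=
  s (line g) (line x) (tt, Fbasis x) (Fbasis_act g x)
  / Fm (act_line_proj K g x) (Fbasis (sact g x)) (Fbasis_act g x).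

(* As in the paper, [s_{delta^g, x} = Lambda(g, g.x) id]: [Lam] is indexed by the target degree. *)
Definition Lam g y : K := s_coeff g (sact (ginv g) y).

Lemma Lam_sact g x : Lam g (sact g x) = s_coeff g x.
Proof. by rewrite /Lam -sactM gmulVg sact1. Qed.

Lemma Lam_neq0 g y : Lam g y != 0.
Proof.
by rewrite /Lam /s_coeff mulf_neq0 ?invr_neq0 ?s_line_neq0 ?Fm_act_line_proj_neq0.
Qed.

Lemma s_nat_line C M c m k :
  s (line (deg C c)) (line (deg M m)) (tt, Fbasis (deg M m)) (Fbasis_act (deg C c) (deg M m))
  * Fm (act_hom (line_proj K c) (line_proj K (M := M) m)) (Fbasis_act (deg C c) (deg M m)) k
  = \sum_m' Fm (line_proj K m) (Fbasis (deg M m)) m' * s C M (c, m') k.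
Proof.
have := s_nat (line_proj K c) (line_proj K (M := M) m) (tt, Fbasis (deg M m)) k.
rewrite !compE (sum_card1 (Fbasis_act _ _) _ (card_F_act_line _ _)) sum_act.
rewrite (big_only1 c) // => [|c' ne _]; last first.
  by rewrite big1 // => m' _; rewrite /= (negPf ne) !mul0r.
by rewrite /= eqxx; under eq_bigr do rewrite mul1r.
Qed.

Lemma eta_compat C M :
  meq (Defs.comp (Ffs Fdeg_equivariant Lam C M) (eta (act_obj C M)))
      (Defs.comp (act_hom (hid K C) (eta M)) (s C M)).
Proof.
case=> c m k; rewrite !compE !sum_act.
rewrite (big_only1 c) // => [|c' ne _]; last first.
  by rewrite big1 // => m' _; rewrite /= /Ffs_fun /= eq_sym (negPf ne) mul0r.
rewrite (big_only1 m) // => [|m' ne _]; last first.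
  by rewrite /= /Ffs_fun /= eqxx eq_sym (negPf ne) mul0r.
rewrite (big_only1 c) // => [|c' ne _]; last first.
  by rewrite big1 // => m' _; rewrite /= eq_sym (negPf ne) !mul0r.
rewrite /= /Ffs_fun /= !eqxx /= Lam_sact; under eq_bigr do rewrite mul1r.
rewrite -s_nat_line line_proj_act Fm_comp compE (sum_card1 (Fbasis_act _ _) _ (card_F_act_line _ _)).
by rewrite /s_coeff mulrA divfK ?Fm_act_line_proj_neq0.
Qed.
End ModuleFunctor.
End LinearFunctor.

Lemma Ffs_pentagon_cocycle (K : fieldType) (G : group) (X Y : gset G) (f : X -> Y)
  (hf : equivariant f) (Lam : G -> X -> K)
  (PsiX : G -> G -> X -> K) (PsiY : G -> G -> Y -> K) :
  (forall g h x, PsiX g h x != 0) -> (forall g x, Lam g x != 0) ->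
  module_pentagon PsiX PsiY (@Ffm K G X Y f) (Ffs hf Lam) ->
  forall g h x, Lam h (sact (ginv g) x) * (Lam (gmul g h) x)^-1 * Lam g x
                = (PsiX g h x)^-1 * PsiY g h (f x).
Proof.
move=> PsiX_neq0 Lam_neq0 pent g h x; pose x0 := sact (ginv (gmul g h)) x.
have x0E : sact (gmul g h) x0 = x by rewrite -sactM gmulgV sact1.
have hx0E : sact h x0 = sact (ginv g) x by rewrite -x0E sactM -sactM gmulVg sact1.
have := pent (line g) (line h) (line x0) (tt, (tt, tt)) ((tt, tt), tt).
rewrite !compE; do ! rewrite ?sum_act ?sum_otens ?sum_line.
rewrite !compE; do ! rewrite ?sum_act ?sum_otens ?sum_line.
rewrite /= /Ffs_fun /mconstr_fun /= mul1r -sactM x0E hx0E -hf x0E => E.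
have -> : PsiY g h (f x) = Lam h (sact (ginv g) x) * (Lam g x * PsiX g h x) / Lam (gmul g h) x.
  by rewrite E mulfK.
by field; rewrite PsiX_neq0 Lam_neq0.
Qed.

Theorem lemma4p20 (K : closedFieldType) (G : group) (X Y : gset G)
  (omega : G -> G -> G -> K) (PsiX : G -> G -> X -> K) (PsiY : G -> G -> Y -> K)
  (homega : normalized_3cocycle omega)
  (hPsiX : module_datum omega PsiX) (hPsiY : module_datum omega PsiY)
  (Fo : gobj X -> gobj Y)
  (Fm : forall M N : gobj X, ghom K M N -> ghom K (Fo M) (Fo N))
  (s : forall (C : gobj G) (M : gobj X), ghom K (Fo (act_obj C M)) (act_obj C (Fo M)))
  (hF : is_module_functor PsiX PsiY Fm s)
  (hsimple : forall M : gobj X, is_simple K M -> is_simple K (Fo M)) :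
  exists (f : X -> Y) (hf : equivariant f) (Lam : G -> X -> K),
    (forall g x, Lam g x != 0) /\
    (forall (g h : G) (x : X),
        Lam h (sact (ginv g) x) * (Lam (gmul g h) x)^-1 * Lam g x
        = (PsiX g h x)^-1 * PsiY g h (f x)) /\
    modfun_iso Fm s (@Ffm K G X Y f) (Ffs hf Lam).
Proof.
case: hF => F_linear [s_iso [s_nat s_pent]]; case: hPsiX => PsiX_neq0 _.
have eta_iso := eta_iso F_linear hsimple.
have eta_nat := eta_nat F_linear (F_simple := hsimple).
have eta_compat := eta_compat F_linear (F_simple := hsimple) s_iso s_nat.
have Lam_neq0 := Lam_neq0 F_linear hsimple s_iso.
have Ffs_pent := module_pentagon_transport eta_iso eta_nat eta_compat s_pent.
exists (Fdeg hsimple), (Fdeg_equivariant F_linear hsimple s_iso), (Lam Fm hsimple s).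
split; first exact: Lam_neq0.
split; first exact: Ffs_pentagon_cocycle PsiX_neq0 Lam_neq0 Ffs_pent.
by exists (eta Fm hsimple).
Qed.
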